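(* Let $(\eta_\ell)_{\ell\in\mathbb{N}}\subseteq[0,\infty)$ and let $D:\mathbb{N}\to(1,\infty)$ satisfy $\sum_{k=\ell}^{\ell+N}\eta_k^2\le D(N)\eta_\ell^2$ for all $\ell,N\in\mathbb{N}$. Suppose there exists $N_0\in\mathbb{N}$ with $$q_{\log}:=\log(D(N_0))-\sum_{j=1}^{N_0}D(j)^{-1}<0,$$ and suppose $(\eta_\ell)$ is quasi-monotone: there is $C_{\rm mon}>0$ with $\eta_{\ell+k}^2\le C_{\rm mon}\eta_\ell^2$ for all $\ell,k\in\mathbb{N}$. Then, with $q:=\exp(q_{\log}/N_0)<1$ and $C:=C_{\rm mon}\exp(-q_{\log})$, $$\eta_{\ell+k}^2\le C q^k\eta_\ell^2\quad\text{for all }k,\ell\in\mathbb{N}.$$ *)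

From Stdlib Require Import Reals.
Open Scope R_scope.

Fixpoint sum_1_to (f : nat -> R) (n : nat) : R :=
  match n with
  | O => 0
  | S m => sum_1_to f m + f (S m)
  end.

Definition qlog (D : nat -> R) (N0 : nat) : R :=
  ln (D N0) - sum_1_to (fun j => / D j) N0.

From Stdlib Require Import Reals Lra Lia.
Open Scope R_scope.

(* Write a_l := eta_l^2 and s(n) := sum_{j=1}^{n} 1/D(j).  Fix l and a window
   length N.  Applying the hypothesis sum_{i<=n} a_{l'+i} <= D(n) a_{l'} at the
   starting point l' = l+j of the window tail of length n = N-j gives
   a_{l+j} + T_{j+1} <= D(n) a_{l+j}, hence T_{j+1} <= (1 - 1/D(n)) T_j
   <= exp(-1/D(n)) T_j for the tails T_j := sum_{i=j}^{N} a_{l+i}.  Starting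
   from T_0 <= D(N) a_l and peeling off N terms yields the one-window
   contraction a_{l+N} <= exp(qlog D N) a_l.  Iterating it over m windows of
   length N0 gives a_{l+m N0} <= exp(q_log)^m a_l, and an arbitrary k = m N0 + r
   with r < N0 is handled by quasi-monotonicity, at the price of the constant
   C_mon exp(-q_log), since exp(q_log)^m <= exp(-q_log) exp(q_log/N0)^k. *)

Lemma exp_le_exp x y : x <= y -> exp x <= exp y.
Proof. intros [Hlt | ->]; [left; now apply exp_increasing | lra]. Qed.

Lemma exp_pow x n : exp x ^ n = exp (INR n * x).
Proof.
  induction n as [|n IH]; [simpl; rewrite Rmult_0_l, exp_0; lra |].
  rewrite <- tech_pow_Rmult, IH, <- exp_plus, S_INR. f_equal. ring.
Qed.

Lemma sum_shift_first (a : nat -> R) (l n : nat) :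
  sum_f_R0 (fun i => a (l + i)%nat) (S n)
    = a l + sum_f_R0 (fun i => a (S l + i)%nat) n.
Proof.
  rewrite decomp_sum by lia. simpl Init.Nat.pred.
  rewrite Nat.add_0_r. f_equal. apply sum_eq. intros i _. f_equal. lia.
Qed.

(* The elementary contraction: if x + y <= d x for nonnegative x, y, then the
   tail y has lost at least the fraction 1/d of the total mass x + y, and
   1 - 1/d <= exp(-1/d). *)
Lemma tail_contraction (d x y : R) :
  0 < d -> 0 <= x -> 0 <= y -> x + y <= d * x -> y <= exp (- / d) * (x + y).
Proof.
  intros Hd Hx Hy Hxy.
  assert (Hfrac : y <= (1 - / d) * (x + y)).
  { replace ((1 - / d) * (x + y)) with (y + / d * (d * x - (x + y)))
      by (field; lra).
    assert (0 <= / d * (d * x - (x + y)))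
      by (apply Rmult_le_pos; [left; now apply Rinv_0_lt_compat | lra]).
    lra. }
  pose proof (exp_ineq1_le (- / d)).
  apply Rle_trans with (1 := Hfrac), Rmult_le_compat_r; lra.
Qed.

(* If the window length is 0, qlog is ln(D 0) > 0; so a negative qlog forces a
   positive window length. *)
Lemma qlog_neg_window_pos (D : nat -> R) (N0 : nat) :
  1 < D 0%nat -> qlog D N0 < 0 -> (0 < N0)%nat.
Proof.
  intros HD0 Hq. destruct N0 as [|N0]; [|lia].
  unfold qlog in Hq. simpl in Hq.
  assert (0 < ln (D 0%nat)) by (rewrite <- ln_1; apply ln_increasing; lra).
  lra.
Qed.

Lemma window_iterate (f : nat -> R) (c : R) (N : nat) :
  0 <= c -> (forall l, f (l + N)%nat <= c * f l) ->
  forall m l, f (l + m * N)%nat <= c ^ m * f l.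
Proof.
  intros Hc Hstep m. induction m as [|m IH]; intro l.
  - rewrite Nat.mul_0_l, Nat.add_0_r. simpl. lra.
  - replace (l + S m * N)%nat with (l + m * N + N)%nat by lia.
    apply Rle_trans with (1 := Hstep _).
    rewrite <- tech_pow_Rmult, Rmult_assoc.
    apply Rmult_le_compat_l; [exact Hc | apply IH].
Qed.

Lemma window_exponent (ql : R) (N m k : nat) :
  ql <= 0 -> (0 < N)%nat -> (k < S m * N)%nat ->
  exp ql ^ m <= exp (- ql) * exp (ql / INR N) ^ k.
Proof.
  intros Hql HN Hk.
  rewrite !exp_pow, <- exp_plus. apply exp_le_exp.
  assert (HNR : 0 < INR N) by (apply lt_0_INR; lia).
  assert (HkR : INR k <= (INR m + 1) * INR N).
  { rewrite <- S_INR, <- mult_INR. apply le_INR. lia. }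
  assert (Hratio : INR k / INR N <= INR m + 1).
  { apply Rmult_le_reg_r with (INR N); [exact HNR |].
    unfold Rdiv. rewrite Rmult_assoc, Rinv_l by lra. lra. }
  replace (INR k * (ql / INR N)) with (ql * (INR k / INR N)) by (field; lra).
  nra.
Qed.

Section TailSumContraction.

Variables (a D : nat -> R).
Hypothesis D_pos : forall N, 0 < D N.
Hypothesis a_nonneg : forall l, 0 <= a l.
Hypothesis tail_sum : forall l N,
  sum_f_R0 (fun i => a (l + i)%nat) N <= D N * a l.

Let s := sum_1_to (fun j => / D j).

Lemma window_tail_bound (l N : nat) : forall j, (j <= N)%nat ->
  sum_f_R0 (fun i => a (l + j + i)%nat) (N - j)
    <= exp (s (N - j) - s N) * (D N * a l).
Proof.
  induction j as [|j IH]; intro Hj.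
  - rewrite Nat.sub_0_r, Nat.add_0_r, Rminus_diag, exp_0, Rmult_1_l.
    apply tail_sum.
  - set (n := (N - S j)%nat).
    assert (En : (N - j)%nat = S n) by (unfold n; lia).
    specialize (IH ltac:(lia)). rewrite En, sum_shift_first in IH.
    pose proof (tail_sum (l + j) (S n)) as Hwin.
    rewrite sum_shift_first in Hwin.
    replace (S (l + j)) with (l + S j)%nat in IH, Hwin by lia.
    assert (Hs : s (S n) - s N = / D (S n) + (s n - s N))
      by (unfold s; simpl; ring).
    rewrite Hs, exp_plus in IH.
    assert (Hcontr := tail_contraction _ _ _ (D_pos (S n)) (a_nonneg (l + j))
      (cond_pos_sum _ _ (fun i => a_nonneg _)) Hwin).
    assert (Hinv : exp (- / D (S n)) * exp (/ D (S n)) = 1)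
      by (rewrite <- exp_plus, Rplus_opp_l; apply exp_0).
    apply Rle_trans with (1 := Hcontr).
    apply Rle_trans with
      (exp (- / D (S n)) * (exp (/ D (S n)) * exp (s n - s N) * (D N * a l))).
    + apply Rmult_le_compat_l; [left; apply exp_pos | lra].
    + right. rewrite <- !Rmult_assoc, Hinv. ring.
Qed.

Lemma window_contraction (N l : nat) : a (l + N)%nat <= exp (qlog D N) * a l.
Proof.
  pose proof (window_tail_bound l N N (le_n N)) as H.
  rewrite Nat.sub_diag in H. simpl sum_f_R0 in H. rewrite Nat.add_0_r in H.
  replace (exp (qlog D N) * a l) with (exp (s 0 - s N) * (D N * a l)); [exact H|].
  unfold qlog. fold s.
  replace (ln (D N) - s N) with (ln (D N) + (s 0 - s N)) by (unfold s; simpl; ring).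
  rewrite exp_plus, exp_ln by apply D_pos. ring.
Qed.

End TailSumContraction.

Theorem mainTheorem3 (eta : nat -> R) (D : nat -> R) (N0 : nat) (Cmon : R)
  (heta : forall l, 0 <= eta l)
  (hD : forall N, 1 < D N)
  (hsum : forall l N, sum_f_R0 (fun i => (eta (l + i)%nat) ^ 2) N <= D N * (eta l) ^ 2)
  (hq : qlog D N0 < 0)
  (hCmon : 0 < Cmon)
  (hmon : forall l k, (eta (l + k)%nat) ^ 2 <= Cmon * (eta l) ^ 2) :
  forall k l,
    (eta (l + k)%nat) ^ 2
      <= (Cmon * exp (- qlog D N0)) * (exp (qlog D N0 / INR N0)) ^ k * (eta l) ^ 2.
Proof.
  intros k l.
  set (a := fun n => eta n ^ 2).
  assert (HN0 : (0 < N0)%nat) by exact (qlog_neg_window_pos D N0 (hD 0%nat) hq).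
  assert (Hwindows : forall m l', a (l' + m * N0)%nat <= exp (qlog D N0) ^ m * a l').
  { apply window_iterate; [left; apply exp_pos |].
    apply window_contraction; [intro N; pose proof (hD N); lra | | exact hsum].
    intro n; apply pow2_ge_0. }
  set (m := (k / N0)%nat).
  assert (Hk : k = (m * N0 + k mod N0)%nat)
    by (unfold m; rewrite (Nat.div_mod k N0) at 1 by lia; lia).
  assert (Hr : (k mod N0 < N0)%nat) by (apply Nat.mod_upper_bound; lia).
  replace (l + k)%nat with (l + m * N0 + k mod N0)%nat by lia.
  apply Rle_trans with (1 := hmon _ _).
  rewrite (Rmult_assoc Cmon), Rmult_assoc. apply Rmult_le_compat_l; [lra |].
  apply Rle_trans with (1 := Hwindows m l).
  apply Rmult_le_compat_r; [apply pow2_ge_0 |].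
  apply window_exponent; lra || lia.
Qed.
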